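(* Let $a\in\mathbb{Z}$ and $b\in\mathbb{Z}_{>0}$ be coprime with $b\not\equiv 0 \pmod 4$, let $x(1)\in\mathbb{R}$, and set $p(1)=a/b$. Define $(p(i),x(i))_{i\ge 1}$ by $$p(i+1)=p(i)-\operatorname{sgn}x(i),\qquad x(i+1)=x(i)+p(i)-\operatorname{sgn}x(i),$$ and assume $x(i)\neq 0$ for all $i\ge 1$. Then the orbit is periodic: there exists an integer $k\ge 1$ with $p(k+1)=p(1)$ and $x(k+1)=x(1)$.
   Context: Here $\operatorname{sgn}(x)=x/|x|$ for $x\neq 0$ and $\operatorname{sgn}(0)=0$. *)

From Stdlib Require Import Reals ZArith Znumtheory.
Open Scope R_scope.

Definition sgn (x : R) : R :=
  match Rlt_dec 0 x with
  | left _ => 1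
  | right _ => match Rlt_dec x 0 with left _ => -1 | right _ => 0 end
  end.

(* orbit p1 x1 n = (p(n+1), x(n+1)) in the paper's 1-based indexing. *)
Fixpoint orbit (p1 x1 : R) (n : nat) : R * R :=
  match n with
  | O => (p1, x1)
  | S m => let '(p, x) := orbit p1 x1 m in
           (p - sgn x, x + p - sgn x)
  end.

(* Since p changes by 1 at each step, p (n) - p (1) and b (x (n) - x (1)) are integers, and the map
   is invertible; so a bounded orbit repeats a state and therefore returns to its start.
   Boundedness comes from an energy. Let q be whichever of b and b / 2 is odd: then A = q (1 - 2 p)
   is an integer congruent to a fixed r modulo 2 q, and 2 r is invertible modulo q. While x > 0 the
   energy 8 q^2 x + A^2 is conserved, and symmetrically while x < 0. Energies are sorted into the
   slots [level mu, level (mu + 1)] of an eventually increasing sequence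
   level mu = (r + 2 mu)^2 + 4 corr mu, where corr is bounded and chosen so that every sign change
   of x reflects the slot index inside a block of q consecutive slots. A positive-negative cycle
   thus moves the slot index by a map [turn] of bounded displacement with turn^q = id (the
   displacements cancel over a period), so the slot index, and with it the energy, stays bounded. *)

From Stdlib Require Import Reals ZArith Znumtheory.
From Stdlib Require Import Classical Lia Lra Psatz List Permutation FinFun.
Open Scope Z_scope.

Fixpoint zsum (F : Z -> Z) (n : nat) : Z :=
  match n with O => 0 | S n' => zsum F n' + F (Z.of_nat n') end.

Lemma zsum_ext F G n :
  (forall s, (s < n)%nat -> F (Z.of_nat s) = G (Z.of_nat s)) -> zsum F n = zsum G n.
Proof. induction n; intros H; simpl; auto. rewrite IHn, H; auto. Qed.

Lemma zsum_add F G n : zsum (fun s => F s + G s) n = zsum F n + zsum G n.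
Proof. induction n; simpl; lia. Qed.

Lemma zsum_lin a b F G n :
  zsum (fun s => a * F s - b * G s) n = a * zsum F n - b * zsum G n.
Proof. induction n; simpl; lia. Qed.

Lemma zsum_const c n : zsum (fun _ => c) n = c * Z.of_nat n.
Proof. induction n; simpl; lia. Qed.

Lemma zsum_telescope f n : zsum (fun i => f (i + 1) - f i) n = f (Z.of_nat n) - f 0.
Proof. induction n; cbn [zsum]; [simpl; lia|]. rewrite IHn, Nat2Z.inj_succ. unfold Z.succ. lia. Qed.

Lemma zsum_fold F n : zsum F n = fold_right Z.add 0 (map F (map Z.of_nat (seq 0 n))).
Proof.
  induction n; [reflexivity|].
  cbn [zsum]. rewrite seq_S, !map_app, fold_right_app, IHn; simpl.
  generalize (map F (map Z.of_nat (seq 0 n))). induction l; simpl; lia.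
Qed.

Lemma fold_right_add_perm l l' : Permutation l l' -> fold_right Z.add 0 l = fold_right Z.add 0 l'.
Proof. induction 1; simpl; lia. Qed.

Lemma In_range_seq q z : 0 <= q -> In z (map Z.of_nat (seq 0 (Z.to_nat q))) <-> 0 <= z < q.
Proof.
  intros Hq. rewrite in_map_iff. split.
  - intros [n [<- Hn]]. apply in_seq in Hn. lia.
  - intros Hz. exists (Z.to_nat z). rewrite in_seq. split; lia.
Qed.

(* A full period of a [q]-periodic function is permuted by [s |-> c + k s] when [k] is a unit mod [q]. *)
Lemma zsum_reindex_mod q F c k u v :
  0 < q -> (forall x, F x = F (x mod q)) -> u * k + v * q = 1 ->
  zsum (fun s => F (c + k * s)) (Z.to_nat q) = zsum F (Z.to_nat q).
Proof.
  intros Hq HF Hkq. rewrite !zsum_fold.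
  set (L := map Z.of_nat (seq 0 (Z.to_nat q))).
  assert (HL : forall z, In z L <-> 0 <= z < q) by (intro; apply In_range_seq; lia).
  replace (map (fun s => F (c + k * s)) L) with (map F (map (fun s => (c + k * s) mod q) L))
    by (rewrite map_map; apply map_ext; intros; symmetry; apply HF).
  apply fold_right_add_perm, Permutation_map, NoDup_Permutation_bis.
  - apply Injective_map_NoDup_in.
    + intros x y Hx%HL Hy%HL Hxy.
      assert (Hdiv : (q | k * (x - y))).
      { apply Z.mod_divide; [lia|].
        replace (k * (x - y)) with ((c + k * x) - (c + k * y)) by ring.
        apply Z.cong_iff_0; exact Hxy. }
      apply Gauss in Hdiv; [|apply bezout_rel_prime, (Bezout_intro _ _ _ v u); lia].
      destruct (Z.eq_dec (x - y) 0) as [|Hne]; [lia|].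
      pose proof (Zdivide_bounds _ _ Hdiv Hne); lia.
    + apply Injective_map_NoDup; [intros ? ? ?; lia|apply seq_NoDup].
  - rewrite !length_map. lia.
  - intros z Hz. apply in_map_iff in Hz as [s [<- _]]. apply HL, Z.mod_pos_bound; lia.
Qed.

Lemma zsum_div_shift q (n : nat) :
  0 < q -> zsum (fun i => (i + Z.of_nat n) / q) (Z.to_nat q) = Z.of_nat n.
Proof.
  intros Hq. induction n.
  - rewrite (zsum_ext _ (fun _ => 0)), zsum_const; [lia|].
    intros s Hs. apply Z.div_small. lia.
  - set (f := fun i => (i + Z.of_nat n) / q).
    rewrite (zsum_ext _ (fun i => f i + (f (i + 1) - f i))).
    2:{ intros s Hs. unfold f. rewrite Nat2Z.inj_succ.
        replace (Z.of_nat s + 1 + Z.of_nat n) with (Z.of_nat s + Z.succ (Z.of_nat n)) by lia. ring. }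
    rewrite zsum_add. unfold f at 1. rewrite IHn, zsum_telescope. unfold f. rewrite Z2Nat.id by lia.
    replace (q + Z.of_nat n) with (Z.of_nat n + 1 * q) by ring.
    rewrite Z.div_add by lia. simpl. lia.
Qed.

Lemma bounded_seq_repeats (f : nat -> Z * Z) (K : Z) :
  (forall n, Z.abs (fst (f n)) < K /\ Z.abs (snd (f n)) < K) ->
  exists i j, (i < j)%nat /\ f i = f j.
Proof.
  intros Hf. destruct (classic (exists i j, (i < j)%nat /\ f i = f j)) as [|Hinj]; [assumption|].
  exfalso.
  set (N := Z.to_nat (2 * K)).
  set (range := map (fun n => Z.of_nat n - K) (seq 0 N)).
  assert (Hrange : forall z, -K <= z < K -> In z range).
  { intros z Hz. apply in_map_iff. exists (Z.to_nat (z + K)). rewrite in_seq. split; lia. }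
  assert (Hlen : (S (N * N) <= N * N)%nat).
  { rewrite <- (length_seq (S (N * N)) 0), <- (length_map f).
    replace (N * N)%nat with (length (list_prod range range))
      by (rewrite length_prod; unfold range; rewrite length_map, length_seq; reflexivity).
    apply NoDup_incl_length.
    - apply Injective_map_NoDup_in; [|apply seq_NoDup].
      intros i j _ _ Hij. destruct (lt_eq_lt_dec i j) as [[Hlt|]|Hlt]; auto;
        exfalso; apply Hinj; [exists i, j|exists j, i]; auto.
    - intros [y z] Hyz. apply in_map_iff in Hyz as [n [Hn _]].
      destruct (Hf n) as [Hy Hz]. rewrite Hn in Hy, Hz.
      apply in_prod; apply Hrange; simpl in *; lia. }
  lia.
Qed.

Section OrbitReturns.

Local Open Scope R_scope.

Variables p1 x1 : R.

Lemma orbit_S n : orbit p1 x1 (S n) =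
  (fst (orbit p1 x1 n) - sgn (snd (orbit p1 x1 n)),
   snd (orbit p1 x1 n) + fst (orbit p1 x1 n) - sgn (snd (orbit p1 x1 n))).
Proof. simpl. destruct (orbit p1 x1 n). reflexivity. Qed.

Lemma orbit_S_inj i j : orbit p1 x1 (S i) = orbit p1 x1 (S j) -> orbit p1 x1 i = orbit p1 x1 j.
Proof.
  rewrite !orbit_S. intros E. injection E as Ep Ex.
  destruct (orbit p1 x1 i) as [p x], (orbit p1 x1 j) as [p' x']. simpl in *.
  assert (x = x') as <- by lra. f_equal. lra.
Qed.

Lemma orbit_repeat_returns i j : (i < j)%nat -> orbit p1 x1 i = orbit p1 x1 j ->
  exists k, (1 <= k)%nat /\ orbit p1 x1 k = orbit p1 x1 0.
Proof.
  revert j. induction i as [|i IH]; intros j Hij E.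
  - exists j. split; [lia|auto].
  - destruct j as [|j]; [lia|]. apply (IH j); [lia|]. apply orbit_S_inj, E.
Qed.

End OrbitReturns.

Section Levels.

Variables q r u v : Z.
Hypothesis q_pos : 0 < q.
Hypothesis r_range : 0 <= r < 2 * q.
Hypothesis inv_2r : u * (2 * r) + v * q = 1.

Definition bump (y : Z) : Z := (y mod q) * (q - y mod q).

Lemma bump_add_mul x m : bump (x + m * q) = bump x.
Proof. unfold bump. rewrite Z.mod_add; lia. Qed.

Lemma bump_mod x : bump (x mod q) = bump x.
Proof. unfold bump. rewrite Z.mod_mod; lia. Qed.

Lemma bump_opp x : bump (- x) = bump x.
Proof.
  unfold bump. destruct (Z.eq_dec (x mod q) 0).
  - rewrite Z.mod_opp_l_z; lia.
  - rewrite Z.mod_opp_l_nz; lia.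
Qed.

Lemma bump_bound x : 0 <= bump x <= q * q.
Proof. unfold bump. pose proof (Z.mod_pos_bound x q q_pos). nia. Qed.

Lemma bump_small l : 0 <= l <= q -> bump l = l * (q - l).
Proof.
  intros Hl. unfold bump. destruct (Z.eq_dec l q) as [->|].
  - rewrite Z.mod_same; lia.
  - rewrite Z.mod_small; lia.
Qed.

Definition corr_incr (z : Z) : Z := 2 * bump (r - z) - 2 * bump z.

Lemma corr_incr_add_mul x m : corr_incr (x + m * q) = corr_incr x.
Proof.
  unfold corr_incr. rewrite bump_add_mul.
  replace (r - (x + m * q)) with (r - x + - m * q) by ring. rewrite bump_add_mul. reflexivity.
Qed.

Lemma corr_incr_mod x : corr_incr (x mod q) = corr_incr x.
Proof.
  rewrite (Z.div_mod x q) at 2 by lia.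
  rewrite Z.add_comm, Z.mul_comm, corr_incr_add_mul. reflexivity.
Qed.

(* [nsteps x] is the number of steps of [- 2 r] leading from [0] to [x] modulo [q]. *)
Definition nsteps (x : Z) : Z := (- x * u) mod q.

Lemma nsteps_range x : 0 <= nsteps x < q.
Proof. apply Z.mod_pos_bound; lia. Qed.

Lemma nsteps_spec x : (q | x + 2 * r * nsteps x).
Proof.
  unfold nsteps. rewrite Z.mod_eq by lia.
  exists (x * v - 2 * r * ((- x * u) / q)).
  replace x with (x * (u * (2 * r) + v * q)) at 1 by (rewrite inv_2r; ring). ring.
Qed.

Lemma nsteps_unique x t : 0 <= t < q -> (q | x + 2 * r * t) -> t = nsteps x.
Proof.
  intros Ht Hd. pose proof (nsteps_range x) as Hn.
  assert (Hdiv : (q | 2 * r * (t - nsteps x))).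
  { replace (2 * r * (t - nsteps x)) with (x + 2 * r * t - (x + 2 * r * nsteps x)) by ring.
    apply Z.divide_sub_r; [exact Hd|apply nsteps_spec]. }
  apply Gauss in Hdiv; [|apply bezout_rel_prime, (Bezout_intro _ _ _ v u); lia].
  destruct (Z.eq_dec (t - nsteps x) 0) as [|Hne]; [lia|].
  pose proof (Zdivide_bounds _ _ Hdiv Hne). lia.
Qed.

Lemma nsteps_add_mul x m : nsteps (x + m * q) = nsteps x.
Proof.
  symmetry. apply nsteps_unique; [apply nsteps_range|].
  replace (x + m * q + 2 * r * nsteps x) with (x + 2 * r * nsteps x + m * q) by ring.
  apply Z.divide_add_r; [apply nsteps_spec|apply Z.divide_mul_r, Z.divide_refl].
Qed.

Lemma nsteps0 : nsteps 0 = 0.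
Proof. symmetry. apply nsteps_unique; [lia|]. exists 0. ring. Qed.

Definition corr_sum (n : nat) : Z := zsum (fun s => corr_incr (- 2 * r * s)) n.

(* The correction term of the level sequence: it makes a sign change of [x] reflect slots exactly. *)
Definition corr (x : Z) : Z := corr_sum (Z.to_nat (nsteps x)).

Lemma corr_add_mul x m : corr (x + m * q) = corr x.
Proof. unfold corr. rewrite nsteps_add_mul. reflexivity. Qed.

Lemma corr0 : corr 0 = 0.
Proof. unfold corr. rewrite nsteps0. reflexivity. Qed.

Lemma corr_sum_period : corr_sum (Z.to_nat q) = 0.
Proof.
  unfold corr_sum. transitivity (zsum corr_incr (Z.to_nat q)).
  { rewrite <- (zsum_reindex_mod q corr_incr 0 (- 2 * r) (- u) v);
      [|lia|intro; symmetry; apply corr_incr_mod|lia].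
    apply zsum_ext; intros; f_equal; ring. }
  unfold corr_incr.
  rewrite (zsum_ext _ (fun z => 2 * bump (r + - 1 * z) - 2 * bump z)) by (intros; do 3 f_equal; ring).
  rewrite zsum_lin.
  rewrite (zsum_reindex_mod q bump r (- 1) (- 1) 0); [ring|lia|intro; symmetry; apply bump_mod|ring].
Qed.

Lemma corr_sub_2r x : corr (x - 2 * r) = corr x + corr_incr x.
Proof.
  pose proof (nsteps_range x) as Hn. destruct (nsteps_spec x) as [m Hm].
  assert (Hincr : corr_incr x = corr_incr (- 2 * r * nsteps x)).
  { replace x with (- 2 * r * nsteps x + m * q) at 1 by lia. apply corr_incr_add_mul. }
  assert (Hnext : corr_sum (Z.to_nat (nsteps (x - 2 * r))) = corr_sum (S (Z.to_nat (nsteps x)))).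
  { destruct (Z.eq_dec (nsteps x + 1) q).
    - replace (nsteps (x - 2 * r)) with 0 by (apply nsteps_unique; [lia|exists (m - 2 * r); nia]).
      replace (S (Z.to_nat (nsteps x))) with (Z.to_nat q) by lia.
      rewrite corr_sum_period. reflexivity.
    - replace (nsteps (x - 2 * r)) with (nsteps x + 1) by (apply nsteps_unique; [lia|exists m; nia]).
      f_equal. lia. }
  unfold corr. rewrite Hnext, Hincr. unfold corr_sum. cbn [zsum].
  rewrite Z2Nat.id by lia. reflexivity.
Qed.

Lemma corr_add_opp x : corr x + corr (- x) = 2 * bump x.
Proof.
  set (D := fun y => corr y + corr (- y) - 2 * bump y).
  assert (D_sub_2r : forall y, D (y - 2 * r) = D y).
  { intro y. unfold D.
    pose proof (corr_sub_2r y) as S1. pose proof (corr_sub_2r (2 * r - y)) as S2.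
    unfold corr_incr in S1, S2.
    replace (2 * r - y - 2 * r) with (- y) in S2 by ring.
    replace (r - (2 * r - y)) with (- (r - y)) in S2 by ring.
    replace (- (y - 2 * r)) with (2 * r - y) by ring.
    rewrite bump_opp in S2.
    replace (bump (y - 2 * r)) with (bump (2 * r - y)) by (rewrite <- bump_opp; f_equal; ring).
    lia. }
  assert (D_add_mul : forall y m, D (y + m * q) = D y).
  { intros y m. unfold D. rewrite corr_add_mul, bump_add_mul.
    replace (- (y + m * q)) with (- y + - m * q) by ring. rewrite corr_add_mul. reflexivity. }
  assert (D_steps : forall n : nat, D (- 2 * r * Z.of_nat n) = 0).
  { induction n.
    - unfold D. rewrite Z.mul_0_r. change (- 0) with 0. rewrite corr0. unfold bump. rewrite Z.mod_0_l; lia.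
    - rewrite Nat2Z.inj_succ.
      replace (- 2 * r * Z.succ (Z.of_nat n)) with (- 2 * r * Z.of_nat n - 2 * r) by ring.
      rewrite D_sub_2r. exact IHn. }
  destruct (nsteps_spec x) as [m Hm]. pose proof (nsteps_range x).
  assert (Hx : D x = 0).
  { replace x with (- 2 * r * Z.of_nat (Z.to_nat (nsteps x)) + m * q) by (rewrite Z2Nat.id; lia).
    rewrite D_add_mul. apply D_steps. }
  unfold D in Hx. lia.
Qed.

Lemma corr_add_refl y : corr y + corr (- 2 * r - y) = 2 * bump (y + r).
Proof.
  replace (- 2 * r - y) with (- y - 2 * r) by ring. rewrite corr_sub_2r.
  pose proof (corr_add_opp y). unfold corr_incr.
  replace (r - - y) with (y + r) by ring. rewrite bump_opp. lia.
Qed.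

Lemma corr_opp_r : corr (- r) = 0.
Proof.
  pose proof (corr_add_refl (- r)) as H.
  replace (- 2 * r - - r) with (- r) in H by ring.
  replace (- r + r) with 0 in H by ring. unfold bump in H. rewrite Z.mod_0_l in H; lia.
Qed.

Lemma corr_bound x : Z.abs (corr x) <= 2 * q * q * q.
Proof.
  assert (Hsum : forall n, Z.abs (corr_sum n) <= 2 * q * q * Z.of_nat n).
  { induction n; [simpl; lia|]. unfold corr_sum. cbn [zsum]. fold (corr_sum n).
    unfold corr_incr. rewrite Nat2Z.inj_succ.
    pose proof (bump_bound (r - - 2 * r * Z.of_nat n)). pose proof (bump_bound (- 2 * r * Z.of_nat n)).
    lia. }
  unfold corr. pose proof (Hsum (Z.to_nat (nsteps x))). pose proof (nsteps_range x).
  rewrite Z2Nat.id in * by lia. nia.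
Qed.

Definition level (mu : Z) : Z := (r + 2 * mu) ^ 2 + 4 * corr mu.

Lemma level_lt_succ mu : 2 * q * q * q <= mu -> level mu < level (mu + 1).
Proof. unfold level. intros. pose proof (corr_bound mu). pose proof (corr_bound (mu + 1)). nia. Qed.

Lemma level_le mu1 mu2 : 2 * q * q * q <= mu1 <= mu2 -> level mu1 <= level mu2.
Proof.
  intros H. replace mu2 with (mu1 + Z.of_nat (Z.to_nat (mu2 - mu1))) by lia.
  induction (Z.to_nat (mu2 - mu1)) as [|n IH]; [rewrite Z.add_0_r; lia|].
  rewrite Nat2Z.inj_succ, <- Z.add_1_r, Z.add_assoc.
  pose proof (level_lt_succ (mu1 + Z.of_nat n) ltac:(lia)). lia.
Qed.

Lemma level_lower mu : 0 <= mu -> 4 * mu * mu - 8 * q * q * q <= level mu.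
Proof. intros. unfold level. pose proof (corr_bound mu). nia. Qed.

Lemma level_upper mu : 0 <= mu -> level mu <= (r + 2 * mu) ^ 2 + 8 * q * q * q.
Proof. intros. unfold level. pose proof (corr_bound mu). nia. Qed.

(* The blocks of [q] consecutive slots between which a sign change of [x] reflects the slot index. *)
Definition block_start (beta : Z) : Prop := exists k, beta = q * k \/ beta = q * k - r.

Lemma block_start_add_q beta : block_start beta -> block_start (beta + q).
Proof. intros [k Hk]. exists (k + 1). lia. Qed.

Lemma corr_block_start beta : block_start beta -> corr beta = 0.
Proof.
  intros [k [-> | ->]].
  - rewrite <- corr0, <- (corr_add_mul 0 k). f_equal. ring.
  - rewrite <- corr_opp_r, <- (corr_add_mul (- r) k). f_equal. ring.
Qed.

Lemma corr_block_sym beta l : block_start beta -> 0 <= l <= q ->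
  corr (beta + l) + corr (beta + q - l) = 2 * l * (q - l).
Proof.
  intros [k [-> | ->]] Hl.
  - replace (q * k + l) with (l + k * q) by ring.
    replace (q * k + q - l) with (- l + (k + 1) * q) by ring.
    rewrite !corr_add_mul, corr_add_opp, bump_small by lia. ring.
  - replace (q * k - r + l) with (- r + l + k * q) by ring.
    replace (q * k - r + q - l) with (- 2 * r - (- r + l) + (k + 1) * q) by ring.
    rewrite !corr_add_mul, corr_add_refl. replace (- r + l + r) with l by ring.
    rewrite bump_small by lia. ring.
Qed.

Lemma level_block_start beta : block_start beta -> level beta = (r + 2 * beta) ^ 2.
Proof. intros H. unfold level. rewrite corr_block_start by exact H. ring. Qed.

Lemma level_block_sym beta l : block_start beta -> 0 <= l <= q ->
  level (beta + l) + level (beta + q - l) = (r + 2 * beta) ^ 2 + (r + 2 * beta + 2 * q) ^ 2.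
Proof. intros Hb Hl. pose proof (corr_block_sym beta l Hb Hl). unfold level. nia. Qed.

Definition in_slot (N : R) (mu : Z) : Prop := (IZR (level mu) <= N <= IZR (level (mu + 1)))%R.

Lemma in_slot_exists (N : R) (mu0 : Z) : 2 * q * q * q <= mu0 -> (IZR (level mu0) <= N)%R ->
  exists mu, mu0 <= mu /\ in_slot N mu.
Proof.
  intros Hmu0 HN.
  assert (search : forall n : nat, (N < IZR (level (mu0 + Z.of_nat n)))%R ->
            exists mu, mu0 <= mu /\ in_slot N mu).
  { induction n as [|n IH]; intros Hlt.
    - rewrite Z.add_0_r in Hlt. lra.
    - destruct (Rlt_dec N (IZR (level (mu0 + Z.of_nat n)))) as [H|H]; [apply IH, H|].
      exists (mu0 + Z.of_nat n). split; [lia|]. unfold in_slot.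
      rewrite Nat2Z.inj_succ, <- Z.add_1_r, Z.add_assoc in Hlt. lra. }
  destruct (archimed N) as [HK _].
  set (nu := Z.max mu0 (Z.max (up N) (2 * q * q * q + 1))).
  apply (search (Z.to_nat (nu - mu0))).
  rewrite Z2Nat.id by lia. replace (mu0 + (nu - mu0)) with nu by ring.
  assert (Hnu : up N <= level nu) by (pose proof (level_lower nu); nia).
  apply IZR_le in Hnu. lra.
Qed.

Lemma in_slot_reflect (mu beta : Z) (N : R) :
  q + 6 * q * q * q <= mu -> block_start beta -> 0 < r + 2 * beta + 2 * q ->
  (IZR ((r + 2 * beta) ^ 2) < N < IZR ((r + 2 * beta + 2 * q) ^ 2))%R -> in_slot N mu ->
  beta <= mu < beta + q /\
  in_slot (IZR ((r + 2 * beta) ^ 2 + (r + 2 * beta + 2 * q) ^ 2) - N)%R (2 * beta + q - 1 - mu).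
Proof.
  intros Hmu Hb Hpos [HN1 HN2] [Hs1 Hs2].
  assert (Hlb : level beta = (r + 2 * beta) ^ 2) by (apply level_block_start, Hb).
  assert (Hlbq : level (beta + q) = (r + 2 * beta + 2 * q) ^ 2).
  { rewrite level_block_start by (apply block_start_add_q, Hb). f_equal. ring. }
  assert (Hlow : beta <= mu).
  { apply Z.nlt_ge. intros Hlt.
    assert (Hle : level (mu + 1) <= level beta) by (apply level_le; nia).
    apply IZR_le in Hle. rewrite Hlb in Hle. lra. }
  assert (Hup : mu < beta + q).
  { apply Z.nle_gt. intros Hle.
    assert (Hlt : (r + 2 * beta + 2 * q) ^ 2 <= level mu).
    { destruct (Z.le_gt_cases (2 * q * q * q) (beta + q)).
      - rewrite <- Hlbq. apply level_le. lia.
      - pose proof (level_lower mu). nia. }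
    apply IZR_le in Hlt. lra. }
  split; [lia|].
  pose proof (level_block_sym beta (mu - beta) Hb ltac:(lia)) as E1.
  pose proof (level_block_sym beta (mu - beta + 1) Hb ltac:(lia)) as E2.
  replace (beta + (mu - beta)) with mu in E1 by ring.
  replace (beta + q - (mu - beta)) with (2 * beta + q - 1 - mu + 1) in E1 by ring.
  replace (beta + (mu - beta + 1)) with (mu + 1) in E2 by ring.
  replace (beta + q - (mu - beta + 1)) with (2 * beta + q - 1 - mu) in E2 by ring.
  apply (f_equal IZR) in E1, E2. rewrite !plus_IZR in E1, E2.
  unfold in_slot. rewrite plus_IZR. lra.
Qed.

Definition mirror (mu : Z) : Z := 2 * q * (mu / q) + q - 1 - mu.

(* The slot index after a sign change from positive to negative [x] and back. *)
Definition turn (mu : Z) : Z := mirror (mirror mu + r) - r.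

Definition turn_disp (j : Z) : Z := - 2 * r + 2 * q * ((q - 1 - j + r) / q).

Lemma mirror_block k mu : q * k <= mu < q * k + q -> mirror mu = 2 * (q * k) + q - 1 - mu.
Proof.
  intros H. unfold mirror. rewrite (Z.div_unique_pos mu q k (mu - q * k)) by lia. ring.
Qed.

Lemma mirror_involutive mu : mirror (mirror mu) = mu.
Proof.
  pose proof (Z.div_mod mu q ltac:(lia)). pose proof (Z.mod_pos_bound mu q q_pos).
  rewrite (mirror_block (mu / q) (mirror mu)); [unfold mirror; ring|].
  unfold mirror. lia.
Qed.

Lemma mirror_bound mu : mu - q < mirror mu < mu + q.
Proof.
  unfold mirror. pose proof (Z.div_mod mu q ltac:(lia)). pose proof (Z.mod_pos_bound mu q q_pos). lia.
Qed.

Lemma turn_eq mu : turn mu = mu + turn_disp (mu mod q).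
Proof.
  unfold turn, mirror, turn_disp.
  pose proof (Z.div_mod mu q ltac:(lia)).
  replace (2 * q * (mu / q) + q - 1 - mu + r) with (q - 1 - mu mod q + r + mu / q * q) by lia.
  rewrite Z.div_add by lia. lia.
Qed.

Lemma turn_disp_bound j : 0 <= j < q -> Z.abs (turn_disp j) <= 4 * q.
Proof.
  intros Hj. unfold turn_disp.
  assert (0 <= (q - 1 - j + r) / q < 3) by (split; [apply Z.div_pos|apply Z.div_lt_upper_bound]; lia).
  nia.
Qed.

Lemma zsum_turn_disp : zsum turn_disp (Z.to_nat q) = 0.
Proof.
  set (H := fun x => (x mod q + r) / q).
  assert (Hsum : zsum (fun j => (q - 1 - j + r) / q) (Z.to_nat q) = r).
  { transitivity (zsum (fun s => H (q - 1 + - 1 * s)) (Z.to_nat q)).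
    { apply zsum_ext. intros s Hs. unfold H. rewrite Z.mod_small by lia. f_equal; ring. }
    rewrite (zsum_reindex_mod q H (q - 1) (- 1) (- 1) 0);
      [|lia|intro; unfold H; rewrite Z.mod_mod by lia; reflexivity|ring].
    transitivity (Z.of_nat (Z.to_nat r)); [|apply Z2Nat.id; lia].
    rewrite <- (zsum_div_shift q (Z.to_nat r)) by lia.
    apply zsum_ext. intros s Hs. unfold H. rewrite Z.mod_small, Z2Nat.id by lia. reflexivity. }
  unfold turn_disp.
  rewrite (zsum_ext _ (fun j => 2 * q * ((q - 1 - j + r) / q) - 2 * r * 1)) by (intros; ring).
  rewrite zsum_lin, Hsum, zsum_const, Z2Nat.id by lia. ring.
Qed.

Lemma iter_turn_mod n mu : Nat.iter n turn mu mod q = (mu - 2 * r * Z.of_nat n) mod q.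
Proof.
  induction n as [|n IH].
  - f_equal. simpl. ring.
  - rewrite Nat2Z.inj_succ. simpl Nat.iter. rewrite turn_eq. unfold turn_disp.
    replace (Nat.iter n turn mu + (- 2 * r + 2 * q * ((q - 1 - Nat.iter n turn mu mod q + r) / q)))
      with (Nat.iter n turn mu - 2 * r + (2 * ((q - 1 - Nat.iter n turn mu mod q + r) / q)) * q) by ring.
    rewrite Z.mod_add, Zminus_mod, IH, <- Zminus_mod by lia. f_equal. ring.
Qed.

Lemma iter_turn_sum n mu :
  Nat.iter n turn mu = mu + zsum (fun s => turn_disp ((mu + - 2 * r * s) mod q)) n.
Proof.
  induction n as [|n IH]; [simpl; ring|].
  simpl Nat.iter. rewrite turn_eq, iter_turn_mod. cbn [zsum]. rewrite IH.
  replace (mu - 2 * r * Z.of_nat n) with (mu + - 2 * r * Z.of_nat n) by ring. ring.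
Qed.

Lemma iter_turn_period mu : Nat.iter (Z.to_nat q) turn mu = mu.
Proof.
  rewrite iter_turn_sum.
  rewrite (zsum_reindex_mod q (fun x => turn_disp (x mod q)) mu (- 2 * r) (- u) v);
    [|lia|intro; rewrite Z.mod_mod by lia; reflexivity|lia].
  rewrite (zsum_ext _ turn_disp), zsum_turn_disp; [ring|].
  intros s Hs. rewrite Z.mod_small by lia. reflexivity.
Qed.

Lemma iter_turn_bound n mu : Z.abs (Nat.iter n turn mu - mu) <= 4 * q * q.
Proof.
  assert (Hlin : forall m, Z.abs (Nat.iter m turn mu - mu) <= 4 * q * Z.of_nat m).
  { induction m as [|m IH]; [simpl; lia|].
    simpl Nat.iter. rewrite turn_eq, Nat2Z.inj_succ.
    pose proof (turn_disp_bound _ (Z.mod_pos_bound (Nat.iter m turn mu) q q_pos)). lia. }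
  rewrite (Nat.div_mod n (Z.to_nat q)), Nat.mul_comm by lia.
  replace (Nat.iter _ turn mu) with (Nat.iter (n mod Z.to_nat q) turn mu).
  2:{ induction (n / Z.to_nat q)%nat as [|k IH]; [reflexivity|].
      replace (S k * Z.to_nat q + n mod Z.to_nat q)%nat
        with (Z.to_nat q + (k * Z.to_nat q + n mod Z.to_nat q))%nat by lia.
      rewrite Nat.iter_add, <- IH, iter_turn_period. reflexivity. }
  pose proof (Hlin (n mod Z.to_nat q)%nat).
  pose proof (Nat.mod_upper_bound n (Z.to_nat q) ltac:(lia)). nia.
Qed.

(* While [x > 0] the energy of [(p, x)] is conserved; for [x < 0] we use [energy (- p) (- x)]. *)
Definition energy (p x : R) : R := (8 * IZR q ^ 2 * x + (IZR q * (1 - 2 * p)) ^ 2)%R.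

Definition signed_energy (p x : R) : R :=
  if Rlt_dec 0 x then energy p x else energy (- p) (- x).

Lemma IZR_sq z : IZR (z ^ 2) = (IZR z ^ 2)%R.
Proof. rewrite Z.pow_2_r, mult_IZR. ring. Qed.

Lemma energy_bound p x E : (0 < x)%R -> (energy p x <= E)%R -> (Rabs p <= E + 1)%R /\ (Rabs x <= E)%R.
Proof.
  intros Hx HE. unfold energy in HE.
  assert (Hq : (1 <= IZR q)%R) by (apply IZR_le; lia).
  assert (Hq2 : (1 <= IZR q ^ 2)%R) by nra.
  assert (Hsq : ((1 - 2 * p) ^ 2 <= (IZR q * (1 - 2 * p)) ^ 2)%R).
  { rewrite Rpow_mult_distr. pose proof (pow2_ge_0 (1 - 2 * p)). nra. }
  assert (Hx8 : (8 * x <= 8 * IZR q ^ 2 * x)%R) by nra.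
  pose proof (pow2_ge_0 (1 - 2 * p)).
  split; [|rewrite Rabs_right by lra; lra].
  destruct (Rle_dec 0 p); [rewrite Rabs_right by lra|rewrite Rabs_left by lra]; nra.
Qed.

Lemma signed_energy_bound p x E : x <> 0%R -> (signed_energy p x <= E)%R ->
  (Rabs p <= E + 1)%R /\ (Rabs x <= E)%R.
Proof.
  unfold signed_energy. intros Hx. destruct (Rlt_dec 0 x); [apply energy_bound, r0|].
  intros HE. rewrite <- (Rabs_Ropp p), <- (Rabs_Ropp x). apply energy_bound, HE. lra.
Qed.

(* The crossing step [x > 0 > x + p - 1]: the energy [energy p x] lies strictly between [A ^ 2] and
   [(A + 2 q) ^ 2], where [A = q (1 - 2 p) = r + 2 beta], and the new energy is its reflection. *)
Lemma energy_cross (p x : R) (beta mu : Z) :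
  (IZR q * (1 - 2 * p))%R = IZR (r + 2 * beta) -> block_start beta ->
  q + 6 * q * q * q <= mu -> (0 < x)%R -> (x + p - 1 < 0)%R -> in_slot (energy p x) mu ->
  beta <= mu < beta + q /\ in_slot (energy (- (p - 1)) (- (x + p - 1))) (2 * beta + q - 1 - mu).
Proof.
  intros HA Hb Hmu Hx Hcross Hs.
  assert (Hq : (1 <= IZR q)%R) by (apply IZR_le; lia).
  assert (HA2 : IZR (r + 2 * beta + 2 * q) = (IZR q * (1 - 2 * p) + 2 * IZR q)%R)
    by (rewrite HA, plus_IZR, mult_IZR; reflexivity).
  assert (Hgap : (0 < IZR q ^ 2 * (1 - p - x))%R) by (apply Rmult_lt_0_compat; nra).
  replace (energy (- (p - 1)) (- (x + p - 1)))
    with (IZR ((r + 2 * beta) ^ 2 + (r + 2 * beta + 2 * q) ^ 2) - energy p x)%R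
    by (rewrite plus_IZR, !IZR_sq, HA2, <- HA; unfold energy; ring).
  apply in_slot_reflect; [exact Hmu|exact Hb| |unfold energy; rewrite !IZR_sq, HA2, <- HA; split; nra|exact Hs].
  apply lt_IZR. rewrite HA2. nra.
Qed.

Section Dynamics.

Variables a b c kap : Z.
Variable x1 : R.
Hypothesis b_pos : 0 < b.
Hypothesis two_q : 2 * q = c * b.
Hypothesis start_shift : q - c * a = r + 2 * q * kap.

Let p1 : R := (IZR a / IZR b)%R.

Definition sgnZ (x : R) : Z := if Rlt_dec 0 x then 1 else if Rlt_dec x 0 then -1 else 0.

Lemma sgn_sgnZ x : sgn x = IZR (sgnZ x).
Proof. unfold sgn, sgnZ. destruct (Rlt_dec 0 x); [reflexivity|]. destruct (Rlt_dec x 0); reflexivity. Qed.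

(* [p (n + 1) = p1 + P] and [x (n + 1) = x1 + Y / b] for [(P, Y) = lattice_orbit n]. *)
Fixpoint lattice_orbit (n : nat) : Z * Z :=
  match n with
  | O => (0, 0)
  | S m => let '(P, Y) := lattice_orbit m in
           let s := sgnZ (x1 + IZR Y / IZR b)%R in (P - s, Y + a + b * (P - s))
  end.

Lemma orbit_lattice n :
  orbit p1 x1 n = ((p1 + IZR (fst (lattice_orbit n)))%R, (x1 + IZR (snd (lattice_orbit n)) / IZR b)%R).
Proof.
  assert (Hb : IZR b <> 0%R) by (apply not_0_IZR; lia).
  induction n as [|n IH]; simpl orbit.
  - f_equal; simpl; field; exact Hb.
  - rewrite IH. simpl lattice_orbit. destruct (lattice_orbit n) as [P Y]. simpl fst; simpl snd.
    rewrite sgn_sgnZ. f_equal.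
    + rewrite minus_IZR. ring.
    + rewrite !plus_IZR, mult_IZR, minus_IZR. unfold p1. field. exact Hb.
Qed.

Lemma energy_root_pos P : (IZR q * (1 - 2 * (p1 + IZR P)))%R = IZR (r + 2 * (q * (kap - P))).
Proof.
  assert (Hb : IZR b <> 0%R) by (apply not_0_IZR; lia).
  assert (Hc : IZR c = (2 * IZR q / IZR b)%R).
  { apply (f_equal IZR) in two_q. rewrite !mult_IZR in two_q. rewrite two_q. field. exact Hb. }
  replace (r + 2 * (q * (kap - P))) with (q - c * a - 2 * q * P) by lia.
  rewrite !minus_IZR, !mult_IZR, Hc. unfold p1. field. exact Hb.
Qed.

Lemma energy_root_neg P :
  (IZR q * (1 - 2 * - (p1 + IZR P)))%R = IZR (r + 2 * (q * (1 + P - kap) - r)).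
Proof.
  replace (IZR q * (1 - 2 * - (p1 + IZR P)))%R
    with (2 * IZR q - IZR q * (1 - 2 * (p1 + IZR P)))%R by ring.
  rewrite energy_root_pos, <- mult_IZR, <- minus_IZR. f_equal. ring.
Qed.

Definition in_turn_orbit (mu0 mu : Z) : Prop := exists t : nat, mu = Nat.iter t turn mu0.

(* The invariant along the orbit: the energy of the state lies in a slot of the [turn]-orbit of
   [mu0], mirrored inside its block while [x < 0]. *)
Definition tracked (mu0 : Z) (p x : R) : Prop :=
  exists mu, in_turn_orbit mu0 mu /\
    ((0 < x)%R /\ in_slot (energy p x) mu \/ (x < 0)%R /\ in_slot (energy (- p) (- x)) (mirror mu)).

Definition far (mu0 : Z) : Prop := forall mu, in_turn_orbit mu0 mu -> 2 * q + 6 * q * q * q <= mu.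

Lemma tracked_step mu0 P x : far mu0 ->
  let p := (p1 + IZR P)%R in
  x <> 0%R -> (x + p - sgn x <> 0)%R -> tracked mu0 p x -> tracked mu0 (p - sgn x) (x + p - sgn x).
Proof.
  intros Hfar p Hx Hx' [mu [Horb [[Hpos Hs] | [Hneg Hs]]]];
    pose proof (Hfar mu Horb) as Hmu; pose proof (mirror_bound mu).
  - replace (sgn x) with 1%R in * by (unfold sgn; destruct (Rlt_dec 0 x); [reflexivity|lra]).
    exists mu. split; [exact Horb|].
    destruct (Rlt_dec (x + p - 1) 0) as [Hc|Hc].
    + right. split; [exact Hc|].
      destruct (energy_cross p x (q * (kap - P)) mu) as [Hblock Hs'];
        [apply energy_root_pos|exists (kap - P); left; reflexivity|nia|exact Hpos|exact Hc|exact Hs|].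
      rewrite (mirror_block (kap - P)) by exact Hblock. exact Hs'.
    + left. split; [lra|]. replace (energy (p - 1) (x + p - 1)) with (energy p x) by (unfold energy; ring).
      exact Hs.
  - replace (sgn x) with (-1)%R in *
      by (unfold sgn; destruct (Rlt_dec 0 x); [lra|]; destruct (Rlt_dec x 0); [reflexivity|lra]).
    destruct (Rlt_dec 0 (x + p - -1)) as [Hc|Hc].
    + exists (turn mu). split; [destruct Horb as [t ->]; exists (S t); reflexivity|]. left. split; [exact Hc|].
      destruct (energy_cross (- p) (- x) (q * (1 + P - kap) - r) (mirror mu)) as [Hblock Hs'];
        [apply energy_root_neg|exists (1 + P - kap); right; reflexivity|nia|lra|lra|exact Hs|].
      unfold turn. rewrite (mirror_block (1 + P - kap)) by lia.
      replace (energy (p - -1) (x + p - -1)) with (energy (- (- p - 1)) (- (- x + - p - 1)))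
        by (f_equal; ring).
      replace (2 * (q * (1 + P - kap)) + q - 1 - (mirror mu + r) - r)
        with (2 * (q * (1 + P - kap) - r) + q - 1 - mirror mu) by ring.
      exact Hs'.
    + exists mu. split; [exact Horb|]. right. split; [lra|].
      replace (energy (- (p - -1)) (- (x + p - -1))) with (energy (- p) (- x)) by (unfold energy; ring).
      exact Hs.
Qed.

Lemma in_turn_orbit_bound mu0 mu : in_turn_orbit mu0 mu -> Z.abs (mu - mu0) <= 4 * q * q.
Proof. intros [t ->]. apply iter_turn_bound. Qed.

Lemma tracked_bounded mu0 : far mu0 ->
  exists B, forall p x, tracked mu0 p x -> (Rabs p <= B)%R /\ (Rabs x <= B)%R.
Proof.
  intros Hfar. assert (Hq3 : 0 <= q * q * q) by nia.
  set (E := (2 * q + 2 * (mu0 + 4 * q * q + q + 1)) ^ 2 + 8 * q * q * q).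
  assert (HE : forall nu, 0 <= nu <= mu0 + 4 * q * q + q + 1 -> (IZR (level nu) <= IZR E)%R).
  { intros nu Hnu. apply IZR_le. pose proof (level_upper nu ltac:(lia)). unfold E.
    assert (0 <= r + 2 * nu <= 2 * q + 2 * (mu0 + 4 * q * q + q + 1)) by lia. nia. }
  exists (IZR E + 1)%R. intros p x [mu [Horb Hs]].
  pose proof (Hfar mu Horb). pose proof (in_turn_orbit_bound _ _ Horb). pose proof (mirror_bound mu).
  destruct Hs as [[Hx [_ Hs]] | [Hx [_ Hs]]].
  - destruct (energy_bound p x (IZR E)) as [Hp Hx']; [exact Hx|eapply Rle_trans; [exact Hs|apply HE; lia]|].
    split; lra.
  - destruct (energy_bound (- p) (- x) (IZR E)) as [Hp Hx']; [lra|eapply Rle_trans; [exact Hs|apply HE; lia]|].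
    rewrite Rabs_Ropp in Hp, Hx'. split; lra.
Qed.

Lemma tracked_forever mu0 n : far mu0 -> (forall m, snd (orbit p1 x1 m) <> 0%R) ->
  tracked mu0 (fst (orbit p1 x1 n)) (snd (orbit p1 x1 n)) ->
  forall d, tracked mu0 (fst (orbit p1 x1 (n + d))) (snd (orbit p1 x1 (n + d))).
Proof.
  intros Hfar Hnz Hn. induction d as [|d IH]; [rewrite Nat.add_0_r; exact Hn|].
  rewrite Nat.add_succ_r, orbit_S. simpl fst; simpl snd.
  pose proof (Hnz (n + d)%nat) as Hcur. pose proof (Hnz (S (n + d))) as Hnext. rewrite orbit_S in Hnext.
  rewrite orbit_lattice in IH, Hcur, Hnext |- *. simpl fst in *; simpl snd in *.
  apply tracked_step; assumption.
Qed.

Lemma tracked_start p x : x <> 0%R ->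
  (IZR (level (3 * q + 6 * q * q * q + 4 * q * q)) <= signed_energy p x)%R ->
  exists mu0, far mu0 /\ tracked mu0 p x.
Proof.
  intros Hx. assert (Hq3 : 0 <= q * q * q) by nia.
  assert (HM : 2 * q * q * q <= 3 * q + 6 * q * q * q + 4 * q * q) by nia.
  unfold signed_energy. destruct (Rlt_dec 0 x) as [Hpos|Hneg]; intros HE;
    destruct (in_slot_exists _ _ HM HE) as [mu [Hmu Hs]].
  - exists mu. split.
    + intros m Hm. pose proof (in_turn_orbit_bound _ _ Hm). lia.
    + exists mu. split; [exists 0%nat; reflexivity|]. left. split; assumption.
  - exists (mirror mu). split.
    + intros m Hm. pose proof (in_turn_orbit_bound _ _ Hm). pose proof (mirror_bound mu). lia.
    + exists (mirror mu). split; [exists 0%nat; reflexivity|]. right.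
      rewrite mirror_involutive. split; [lra|exact Hs].
Qed.

Lemma orbit_bounded : (forall n, snd (orbit p1 x1 n) <> 0%R) ->
  exists n0 B, forall n, (n0 <= n)%nat ->
    (Rabs (fst (orbit p1 x1 n)) <= B)%R /\ (Rabs (snd (orbit p1 x1 n)) <= B)%R.
Proof.
  intros Hnz. set (L := IZR (level (3 * q + 6 * q * q * q + 4 * q * q))).
  destruct (classic (exists n, (L <= signed_energy (fst (orbit p1 x1 n)) (snd (orbit p1 x1 n)))%R))
    as [[n Hn]|Hlow].
  - destruct (tracked_start _ _ (Hnz n) Hn) as [mu0 [Hfar Htr]].
    destruct (tracked_bounded mu0 Hfar) as [B HB].
    exists n, B. intros m Hm. replace m with (n + (m - n))%nat by lia.
    apply HB, tracked_forever; assumption.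
  - exists 0%nat, (L + 1)%R. intros m _.
    destruct (signed_energy_bound (fst (orbit p1 x1 m)) _ L (Hnz m)) as [Hp Hx].
    + apply Rnot_lt_le. intros Hlt. apply Hlow. exists m. lra.
    + split; lra.
Qed.

Lemma lattice_orbit_bound n B :
  (Rabs (fst (orbit p1 x1 n)) <= B)%R -> (Rabs (snd (orbit p1 x1 n)) <= B)%R ->
  let K := up (B + Rabs p1 + IZR b * (B + Rabs x1)) in
  Z.abs (fst (lattice_orbit n)) < K /\ Z.abs (snd (lattice_orbit n)) < K.
Proof.
  rewrite orbit_lattice. simpl fst; simpl snd. intros Hp Hx K.
  destruct (archimed (B + Rabs p1 + IZR b * (B + Rabs x1))) as [HK _]. fold K in HK.
  assert (Hb : (1 <= IZR b)%R) by (apply IZR_le; lia).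
  assert (HB0 : (0 <= B)%R) by (eapply Rle_trans; [apply Rabs_pos|exact Hp]).
  pose proof (Rabs_pos p1). pose proof (Rabs_pos x1).
  assert (0 <= IZR b * (B + Rabs x1))%R by (apply Rmult_le_pos; lra).
  split; apply lt_IZR; rewrite abs_IZR.
  - replace (IZR (fst (lattice_orbit n))) with ((p1 + IZR (fst (lattice_orbit n))) + - p1)%R by ring.
    pose proof (Rabs_triang (p1 + IZR (fst (lattice_orbit n))) (- p1)). rewrite Rabs_Ropp in *. lra.
  - replace (IZR (snd (lattice_orbit n)))
      with (IZR b * ((x1 + IZR (snd (lattice_orbit n)) / IZR b) + - x1))%R by (field; lra).
    rewrite Rabs_mult, (Rabs_right (IZR b)) by lra.
    pose proof (Rabs_triang (x1 + IZR (snd (lattice_orbit n)) / IZR b) (- x1)). rewrite Rabs_Ropp in *.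
    assert (IZR b * Rabs (x1 + IZR (snd (lattice_orbit n)) / IZR b + - x1) <= IZR b * (B + Rabs x1))%R
      by (apply Rmult_le_compat_l; lra).
    lra.
Qed.

Lemma orbit_periodic : (forall n, snd (orbit p1 x1 n) <> 0%R) ->
  exists k, (1 <= k)%nat /\ orbit p1 x1 k = orbit p1 x1 0.
Proof.
  intros Hnz. destruct (orbit_bounded Hnz) as [n0 [B HB]].
  destruct (bounded_seq_repeats (fun i => lattice_orbit (n0 + i))
              (up (B + Rabs p1 + IZR b * (B + Rabs x1)))) as [i [j [Hij E]]].
  { intros i. destruct (HB (n0 + i)%nat) as [Hp Hx]; [lia|]. apply lattice_orbit_bound; assumption. }
  apply (orbit_repeat_returns p1 x1 (n0 + i) (n0 + j)); [lia|].
  rewrite !orbit_lattice, E. reflexivity.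
Qed.

End Dynamics.

End Levels.

Lemma orbit_periodic_of_modulus (a b q c : Z) (x1 : R) :
  0 < b -> 0 < q -> 2 * q = c * b -> rel_prime (2 * (q - c * a)) q ->
  (forall n, snd (orbit (IZR a / IZR b) x1 n) <> 0%R) ->
  exists k, (1 <= k)%nat /\ orbit (IZR a / IZR b) x1 k = orbit (IZR a / IZR b) x1 0.
Proof.
  intros Hb Hq Hcb Hcop.
  set (kap := (q - c * a) / (2 * q)).
  set (r := (q - c * a) mod (2 * q)).
  assert (Hr : 0 <= r < 2 * q) by (apply Z.mod_pos_bound; lia).
  assert (Hk : q - c * a = r + 2 * q * kap) by (rewrite Z.add_comm; apply Z.div_mod; lia).
  destruct (rel_prime_bezout _ _ Hcop) as [u v Huv].
  apply (orbit_periodic q r u (v + 4 * u * kap) Hq Hr ltac:(lia) a b c kap x1 Hb Hcb Hk).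
Qed.

Lemma odd_half_modulus b : 0 < b -> b mod 4 <> 0 ->
  exists q c, 0 < q /\ q mod 2 = 1 /\ 2 * q = c * b /\ (c = 1 \/ c = 2).
Proof.
  intros Hb H4. pose proof (Z.div_mod b 4 ltac:(lia)). pose proof (Z.mod_pos_bound b 4 ltac:(lia)).
  assert (Hb2 : b mod 2 = (b mod 4) mod 2) by (symmetry; apply Z.mod_mod_divide; exists 2; reflexivity).
  destruct (Z.eq_dec (b mod 4) 2) as [E|E].
  - exists (b / 2), 1. rewrite E in Hb2. change (2 mod 2) with 0 in Hb2.
    pose proof (Z.div_mod b 2 ltac:(lia)).
    replace (b / 2) with (1 + (b / 4) * 2) by lia. rewrite Z.mod_add by lia.
    split; [lia|split; [reflexivity|split; [lia|left; reflexivity]]].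
  - exists b, 2. repeat split; try lia.
    rewrite Hb2. destruct (Z.eq_dec (b mod 4) 1) as [->|]; [reflexivity|].
    replace (b mod 4) with 3 by lia. reflexivity.
Qed.

Lemma rel_prime_twice_shift a b q c : 0 < b -> rel_prime a b -> q mod 2 = 1 ->
  2 * q = c * b -> c = 1 \/ c = 2 -> rel_prime (2 * (q - c * a)) q.
Proof.
  intros Hb Hab Hq Hcb Hc.
  assert (Haq : rel_prime a q).
  { apply rel_prime_sym, (rel_prime_div b); [apply rel_prime_sym, Hab|].
    destruct Hc as [->| ->]; [exists 2|exists 1]; lia. }
  assert (H2q : rel_prime 2 q).
  { apply prime_rel_prime; [apply prime_2|]. intros Hdiv. apply Z.mod_divide in Hdiv; lia. }
  assert (Hcaq : rel_prime (c * a) q).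
  { apply rel_prime_sym, rel_prime_mult; apply rel_prime_sym; [|exact Haq].
    destruct Hc as [-> | ->]; [apply rel_prime_1|exact H2q]. }
  assert (Hsq : rel_prime (q - c * a) q).
  { destruct (rel_prime_bezout _ _ Hcaq) as [s t Hst].
    apply bezout_rel_prime, (Bezout_intro _ _ _ (- s) (s + t)). lia. }
  apply rel_prime_sym, rel_prime_mult; apply rel_prime_sym; assumption.
Qed.

Open Scope R_scope.

Theorem mainTheorem5 (a b : Z) (x1 : R) :
  (0 < b)%Z ->
  Zis_gcd a b 1%Z ->
  (Z.modulo b 4 <> 0)%Z ->
  (forall n : nat, snd (orbit (IZR a / IZR b) x1 n) <> 0) ->
  exists k : nat, (1 <= k)%nat /\
    orbit (IZR a / IZR b) x1 k = orbit (IZR a / IZR b) x1 0.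
Proof.
  intros Hb Hab H4 Hnz.
  destruct (odd_half_modulus b Hb H4) as [q [c [Hq [Hodd [Hcb Hc]]]]].
  apply (orbit_periodic_of_modulus a b q c x1); try assumption.
  apply (rel_prime_twice_shift a b); assumption.
Qed.
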